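(* Let $B$ be a boolean algebra, $(\mathcal L,i)$ the free frame on ${\sf Filt}(B)$ as in the context, and define $e:B\to\mathfrak B(\mathcal L)$ by $e(b)=i({\uparrow}b)$. Then $e$ is a well-defined injective boolean homomorphism, and the pair $(\mathfrak B(\mathcal L),e)$ is a canonical extension of $B$; that is, $e$ is dense and compact.
   Context: ${\sf Filt}(B)$ is the set of filters of $B$ ordered by reverse inclusion; it is a meet-semilattice with top $\{1\}$ and bottom $B$. Concretely, $\mathcal L$ is the frame of all subsets of the set of proper filters of $B$ that are closed upward under inclusion, ordered by inclusion, and $i(F)=\{G\text{ proper filter}\mid F\subseteq G\}$; $(\mathcal L,i)$ is the free frame on ${\sf Filt}(B)$. For a frame $L$, $a^*=\bigvee\{s\mid a\wedge s=0\}$ and $\mathfrak B(L)=\{a^{**}\mid a\in L\}$ is the booleanization, a complete boolean algebra with meets as in $L$ and joins $(\bigvee S)^{**}$. For a boolean algebra $B$, a complete boolean algebra $C$ and an injective boolean homomorphism $e:B\to C$: $e$ is compact if whenever $S,T\subseteq B$ with $\bigwedge e[S]\le\bigvee e[T]$ there are finite $S_0\subseteq S$, $T_0\subseteq T$ with $\bigwedge S_0\le\bigvee T_0$; $e$ is dense if every element of $C$ is a join of meets of elements of $e[B]$; $(C,e)$ is a canonical extension if $e$ is dense and compact. *)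

From mathcomp Require Import all_boot all_order.
Set Implicit Arguments. Unset Strict Implicit. Unset Printing Implicit Defensive.
Import Order.Theory.
Local Open Scope order_scope.

Definition pset (T : Type) := T -> Prop.
Definition psubset (T : Type) (A C : pset T) := forall x, A x -> C x.

Section BoolFrame.
Context {d : Order.disp_t} (B : ctbDistrLatticeType d).

Definition is_filter (F : pset B) : Prop :=
  [/\ F \top,
      (forall x y : B, F x -> x <= y -> F y) &
      (forall x y : B, F x -> F y -> F (x `&` y))].

Definition proper_filter (F : pset B) : Prop := is_filter F /\ ~ F \bot.

Definition upb (b : B) : pset B := fun x => b <= x.

(* Elements of the frame L: subsets of the set of proper filters that are
   closed upward under inclusion. L is ordered by inclusion; its meets are
   intersections (empty meet = all proper filters), joins are unions. *)
Definition Lelem (U : pset (pset B)) : Prop :=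
  (forall G, U G -> proper_filter G) /\
  (forall G H, U G -> proper_filter H -> psubset G H -> U H).

Definition iota (F : pset B) : pset (pset B) :=
  fun G => proper_filter G /\ psubset F G.

Definition Ltop : pset (pset B) := proper_filter.
Definition Lbot : pset (pset B) := fun _ => False.

Definition pc (a : pset (pset B)) : pset (pset B) :=
  fun G => exists s, [/\ Lelem s,
                        (forall H, ~ (a H /\ s H)) & s G].

Definition inBool (x : pset (pset B)) : Prop :=
  exists a, Lelem a /\ x = pc (pc a).

(* Meets in B(L) are as in L: intersection, empty meet = top of L. *)
Definition bmeet (S : pset (pset (pset B))) : pset (pset B) :=
  fun G => proper_filter G /\ forall s, S s -> s G.

Definition bjoin (S : pset (pset (pset B))) : pset (pset B) :=
  pc (pc (fun G => exists s, S s /\ s G)).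

Definition pair_set (T : Type) (a c : T) : pset T := fun x => x = a \/ x = c.
Definition empty_set (T : Type) : pset T := fun _ => False.
Definition image (T U : Type) (f : T -> U) (S : pset T) : pset U :=
  fun y => exists2 x, S x & y = f x.

Definition emb (b : B) : pset (pset B) := iota (upb b).

(* e is a boolean homomorphism B -> B(L) (the operations of B(L) being
   bmeet / bjoin, complement = boolean complement in B(L)). *)
Definition bool_hom (f : B -> pset (pset B)) : Prop :=
  [/\ forall a b : B, f (a `&` b) = bmeet (pair_set (f a) (f b)),
      forall a b : B, f (a `|` b) = bjoin (pair_set (f a) (f b)),
      f \bot = bjoin (@empty_set _),
      f \top = bmeet (@empty_set _) &
      forall a : B,
        bmeet (pair_set (f a) (f (~` a))) = bjoin (@empty_set _) /\
        bjoin (pair_set (f a) (f (~` a))) = bmeet (@empty_set _)].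

Definition compact_emb (f : B -> pset (pset B)) : Prop :=
  forall S T : pset B,
    psubset (bmeet (image f S)) (bjoin (image f T)) ->
    exists (S0 T0 : seq B),
      [/\ (forall x, x \in S0 -> S x),
          (forall y, y \in T0 -> T y) &
          \meet_(x <- S0) x <= \join_(y <- T0) y].

Definition dense_emb (f : B -> pset (pset B)) : Prop :=
  forall x, inBool x ->
    exists Fam : pset (pset B),
      x = bjoin (fun y => exists2 S, Fam S & y = bmeet (image f S)).

End BoolFrame.

From Pilot Require Import Defs.
From mathcomp Require Import all_boot all_order.
From Stdlib Require Import Classical FunctionalExtensionality PropExtensionality.
Set Implicit Arguments. Unset Strict Implicit. Unset Printing Implicit Defensive.
Import Order.Theory.
Local Open Scope order_scope.

(* The frame L consists of the upward closed sets of proper filters, joins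
   being unions.  Hence its pseudocomplement has a pointwise description
   ([pcE]): a proper filter G lies in a* iff no proper filter extending G lies
   in a.

   Write e(b) for the set of proper filters containing b.  The key fact is
   that e(b) is regular, e(b)** = e(b) ([emb_regular]): a proper filter
   missing b extends to the proper filter generated by it and ~b, which lies
   in e(b)*.  The boolean-homomorphism laws then follow from the filter
   axioms, and injectivity from principal filters.  For density, the meet
   of e over a set S is the set of proper filters containing S, so every
   regular x is the union, hence the join in B(L), of such meets taken over
   its own members.  For compactness, if no finite S0, T0 satisfy
   /\S0 <= \/T0, the elements above some /\S0 minus \/T0 form a proper filter
   in /\e[S] that cannot lie in (\/e[T])**. *)

Section CanonicalExtension.
Context {d : Order.disp_t} (B : ctbDistrLatticeType d).
Implicit Types (G H K F : pset B) (a x : pset (pset B)) (c : B).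

Lemma pset_ext x x' : (forall G, x G <-> x' G) -> x = x'.
Proof.
move=> h; apply: functional_extensionality => G.
exact/propositional_extensionality/h.
Qed.

Definition up_closed x :=
  forall G H, x G -> proper_filter H -> psubset G H -> x H.

Lemma proper_filter_compl G c : proper_filter G -> G c -> ~ G (~` c).
Proof.
case=> -[_ _ Gmeet] Gbot Gc Gnc; apply: Gbot.
by rewrite -(meetxC c); apply: Gmeet.
Qed.

Lemma pcE a G : pc a G <->
  proper_filter G /\ forall H, proper_filter H -> psubset G H -> ~ a H.
Proof.
split.
- case=> s [[sproper sup] disj sG]; split; first exact: sproper.
  by move=> H pH GH aH; apply: (disj H); split=> //; apply: sup sG pH GH.
- case=> pG hG.
  exists (fun G' => proper_filter G' /\
            forall H, proper_filter H -> psubset G' H -> ~ a H); split=> //.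
  + split=> [? [] // | G1 H1 [pG1 h1] pH1 G1H1]; split=> // K pK H1K.
    exact: h1 pK (fun y Gy => H1K y (G1H1 y Gy)).
  + by move=> H [aH [pH hH]]; apply: hH H pH (fun _ h => h) aH.
Qed.

Lemma pc_proper a G : pc a G -> proper_filter G.
Proof. by case/pcE. Qed.

Lemma pc_up_closed a : up_closed (pc a).
Proof.
move=> G H /pcE [pG h] pH GH; apply/pcE; split=> // K pK HK.
exact: h K pK (fun y Gy => HK y (GH y Gy)).
Qed.

Lemma pcpc_ge a :
  up_closed a -> forall G, proper_filter G -> a G -> pc (pc a) G.
Proof.
move=> aup G pG aG; apply/pcE; split=> // H pH GH /pcE [_ h].
exact: (h H pH (fun _ h => h)) (aup G H aG pH GH).
Qed.

Lemma pc_anti a a' : (forall G, proper_filter G -> a G -> a' G) ->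
  forall G, pc a' G -> pc a G.
Proof.
move=> aa' G /pcE [pG h]; apply/pcE; split=> // H pH GH aH.
exact: h H pH GH (aa' H pH aH).
Qed.

Lemma pc3 a : up_closed a -> pc (pc (pc a)) = pc a.
Proof.
move=> aup; apply: pset_ext => G; split.
- by apply: pc_anti => H pH aH; apply: pcpc_ge.
- move=> h; exact: (pcpc_ge (@pc_up_closed _) (pc_proper h) h).
Qed.

Definition gen G c : pset B := fun y => exists2 g, G g & g `&` c <= y.

Lemma gen_filter G c : is_filter G -> is_filter (gen G c).
Proof.
case=> Gtop Gup Gmeet; split.
- by exists \top; rewrite ?lex1.
- by move=> y z [g Gg gy] yz; exists g => //; apply: le_trans gy yz.
- move=> y z [g1 Gg1 g1y] [g2 Gg2 g2z]; exists (g1 `&` g2); first exact: Gmeet.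
  rewrite lexI (le_trans _ g1y) ?(le_trans _ g2z) //; apply: leI2 => //;
    [exact: leIr | exact: leIl].
Qed.

Lemma no_proper_extension_mem H c : is_filter H ->
  (forall K, proper_filter K -> psubset H K -> ~ K c) ->
  exists2 h, H h & h `&` c <= \bot.
Proof.
move=> fH noext; apply: NNPP => disj.
apply: (noext (gen H c)); first by split; [apply: gen_filter | apply: disj].
- by move=> y Hy; exists y => //; apply: leIl.
- by case: fH => Htop _ _; exists \top => //; apply: leIr.
Qed.

Lemma embE c G : emb c G <-> proper_filter G /\ G c.
Proof.
split=> [[pG Gup] | [pG Gc]]; first by split=> //; apply: Gup; rewrite /upb.
by split=> // y cy; case: pG => -[_ Gup _] _; apply: Gup Gc cy.
Qed.

Lemma emb_Lelem c : Lelem (emb c).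
Proof.
split=> [G /embE [] // | G H /embE [_ Gc] pH GH].
by apply/embE; split=> //; apply: GH.
Qed.

Lemma compl_in_pc_emb K c : proper_filter K -> K (~` c) -> pc (emb c) K.
Proof.
move=> pK Knc; apply/pcE; split=> // H pH KH /embE [_ Hc].
exact: proper_filter_compl pH Hc (KH _ Knc).
Qed.

(* The key fact: e(c) is regular, so e lands in B(L).  If a proper filter G
   in e(c)** missed c, the filter generated by G and ~c would be a proper
   extension lying in e(c)*. *)
Lemma emb_regular c : pc (pc (emb c)) = emb c.
Proof.
apply: pset_ext => G; split=> [/pcE [pG noext] | /embE [pG Gc]].
- have [g Gg gnc] : exists2 g, G g & g `&` ~` c <= \bot.
    apply: no_proper_extension_mem (proj1 pG) _ => K pK GK Knc.
    exact: noext K pK GK (compl_in_pc_emb pK Knc).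
  have gc : g <= c by rewrite -[c]complK -disj_leC eq_le gnc le0x.
  apply/embE; split; first exact: pG.
  by case: pG => -[_ Gup _] _; apply: Gup Gg gc.
- by apply: (pcpc_ge (proj2 (emb_Lelem c)) pG); apply/embE.
Qed.

(* e preserves binary meets, binary joins, bottom and top; complements
   follow since both are determined by meets and joins. *)
Lemma emb_meet (a b : B) : emb (a `&` b) = bmeet (pair_set (emb a) (emb b)).
Proof.
apply: pset_ext => G; rewrite embE; split=> [[pG Gab] | [pG h]].
- split=> // s [->|->]; apply/embE; split=> //;
    case: pG => -[_ Gup _] _; apply: Gup Gab _; [exact: leIl | exact: leIr].
- have /embE [_ Ga] := h _ (or_introl erefl).
  have /embE [_ Gb] := h _ (or_intror erefl).
  by split=> //; case: pG => -[_ _ Gmeet] _; apply: Gmeet.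
Qed.

(* A filter containing a \/ b has no proper extension in (e(a) u e(b))*:
   such an extension would meet both a and b in \bot, hence contain \bot. *)
Lemma emb_join (a b : B) : emb (a `|` b) = bjoin (pair_set (emb a) (emb b)).
Proof.
apply: pset_ext => G; split.
- move/embE => [pG Gab]; apply/pcE; split=> // H pH GH /pcE [_ noext].
  have disj c : emb c = emb a \/ emb c = emb b ->
      exists2 h, H h & h `&` c <= \bot.
    move=> ec; apply: no_proper_extension_mem (proj1 pH) _ => K pK HK Kc.
    by apply: (noext K pK HK); exists (emb c); split=> //; apply/embE.
  have [[h1 Hh1 h1a] [h2 Hh2 h2b]] := (disj a (or_introl erefl),
                                        disj b (or_intror erefl)).
  case: pH => -[_ Hup Hmeet] Hbot; apply: Hbot.
  apply: Hup (Hmeet _ _ (Hmeet _ _ Hh1 Hh2) (GH _ Gab)) _.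
  rewrite meetUr leUx (le_trans _ h1a) ?(le_trans _ h2b) //;
    by rewrite leI2 // (leIl, leIr).
- rewrite -[emb (a `|` b)]emb_regular; apply: pc_anti => H pH.
  apply: pc_anti => K pK.
  case=> s [[->|->] /embE [_ Ks]]; apply/embE; split=> //;
    case: pK => -[_ Kup _] _; apply: Kup Ks _; [exact: leUl | exact: leUr].
Qed.

Lemma emb_bot : emb (\bot : B) = bjoin (@empty_set _).
Proof.
apply: pset_ext => G; split=> [/embE [[_ Gbot] G0] // | /pcE [pG noext]].
exfalso; apply: (noext G pG (fun _ h => h)).
by apply/pcE; split=> // H _ _ [s []].
Qed.

Lemma emb_top : emb (\top : B) = bmeet (@empty_set _).
Proof.
apply: pset_ext => G; rewrite embE.
by split=> [[pG _] | [pG _]]; split=> //; case: pG => -[].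
Qed.

Lemma emb_bool_hom : bool_hom (@emb d B).
Proof.
split; [exact: emb_meet | exact: emb_join | exact: emb_bot | exact: emb_top |].
by move=> b; rewrite -emb_meet -emb_join meetxC joinxC emb_bot emb_top.
Qed.

(* Injectivity: the principal filter of b <> \bot lies in e(b). *)
Lemma upb_proper (b : B) : b != \bot -> proper_filter (upb b).
Proof.
move=> nb; split; last by rewrite /upb lex0 (negbTE nb).
split=> [|y z by' yz|y z by' bz]; first exact: lex1.
- exact: le_trans by' yz.
- by rewrite /upb lexI by' bz.
Qed.

Lemma emb_inj : injective (@emb d B).
Proof.
have emb_le (b1 b2 : B) : emb b1 = emb b2 -> b2 <= b1.
  move=> e12; have [->|nb] := eqVneq b2 \bot; first exact: le0x.
  have : emb b2 (upb b2).
    by apply/embE; split; [exact: upb_proper | exact: lexx].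
  by rewrite -e12 => /embE [].
by move=> b1 b2 e12; apply: le_anti; rewrite emb_le // emb_le.
Qed.

Lemma bmeet_image_emb (S : pset B) :
  bmeet (Defs.image (@emb d B) S) = Defs.iota S.
Proof.
apply: pset_ext => G; split=> [[pG h] | [pG SG]]; split=> //.
- by move=> y Sy; have /embE [] := h _ (ex_intro2 _ _ y Sy erefl).
- by move=> s [y Sy ->]; apply/embE; split=> //; apply: SG.
Qed.

(* A regular element x is the B(L)-join of the meets e[F] for F in x. *)
Lemma emb_dense : dense_emb (@emb d B).
Proof.
move=> _ [a [_ ->]]; exists (pc (pc a)); rewrite /bjoin.
set U := fun G => exists s, _ /\ s G.
have -> : U = pc (pc a).
  apply: pset_ext => G; split=> [[s [[F aF ->]]] | aG].
  - by rewrite bmeet_image_emb => -[pG FG]; apply: pc_up_closed aF pG FG.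
  - exists (bmeet (Defs.image (@emb d B) G)); split; first by exists G.
    by rewrite bmeet_image_emb; split; [apply: pc_proper aG | move=> ?].
by rewrite pc3 //; apply: pc_up_closed.
Qed.

Section Compactness.
Variables S T : pset B.

(* The filter generated by S and the complements of the elements of T:
   all y with /\S0 <= \/T0 \/ y for some finite S0 in S and T0 in T. *)
Definition sep_filter : pset B := fun y => exists S0 T0,
  [/\ (forall u, u \in S0 -> S u), (forall t, t \in T0 -> T t) &
      \meet_(u <- S0) u <= \join_(t <- T0) t `|` y].

Lemma sep_filter_is_filter : is_filter sep_filter.
Proof.
split.
- by exists [::], [::]; split=> //; rewrite joinx1 lex1.
- move=> y z [S0 [T0 [S0S T0T le0]]] yz; exists S0, T0; split=> //.
  by apply: le_trans le0 _; apply: leU2.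
- move=> y z [S0 [T0 [S0S T0T le0]]] [S1 [T1 [S1S T1T le1]]].
  exists (S0 ++ S1), (T0 ++ T1); split.
  + by move=> u; rewrite mem_cat => /orP [/S0S|/S1S].
  + by move=> t; rewrite mem_cat => /orP [/T0T|/T1T].
  + rewrite !big_cat /= joinIr leI2 //.
    * by apply: le_trans le0 _; rewrite leU2 // leUl.
    * by apply: le_trans le1 _; rewrite leU2 // leUr.
Qed.

Lemma sep_filter_proper :
  ~ (exists S0 T0, [/\ (forall u, u \in S0 -> S u),
                       (forall t, t \in T0 -> T t) &
                       \meet_(u <- S0) u <= \join_(t <- T0) t]) ->
  proper_filter sep_filter.
Proof.
move=> no_witness; split; first exact: sep_filter_is_filter.
case=> S0 [T0 [S0S T0T le0]]; apply: no_witness; exists S0, T0.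
by rewrite -[X in _ <= X]joinx0.
Qed.

Lemma sep_filter_mem u : S u -> sep_filter u.
Proof.
move=> Su; exists [:: u], [::]; split=> //.
  by move=> y; rewrite inE => /eqP ->.
by rewrite big_seq1 big_nil join0x.
Qed.

Lemma sep_filter_compl t : T t -> sep_filter (~` t).
Proof.
move=> Tt; exists [::], [:: t]; split=> //.
  by move=> y; rewrite inE => /eqP ->.
by rewrite big_nil big_seq1 joinxC.
Qed.

End Compactness.

(* Compactness: without a finite witness, [sep_filter S T] is a proper filter
   in /\e[S] which also lies in (\/e[T])*, so it cannot be in (\/e[T])**. *)
Lemma emb_compact : compact_emb (@emb d B).
Proof.
move=> S T meet_le_join; apply: NNPP => no_witness.
have pF := sep_filter_proper no_witness.
have /meet_le_join /pcE [_ noext] :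
    bmeet (Defs.image (@emb d B) S) (sep_filter S T).
  by rewrite bmeet_image_emb; split=> // u; apply: sep_filter_mem.
apply: (noext _ pF (fun _ h => h)); apply/pcE; split=> // K pK FK.
case=> _ [[t Tt ->] /embE [_ Kt]].
exact: proper_filter_compl pK Kt (FK _ (sep_filter_compl S Tt)).
Qed.

End CanonicalExtension.

Theorem mainTheorem3 (d : Order.disp_t) (B : ctbDistrLatticeType d) :
  [/\ forall b : B, inBool (emb b),
      injective (@emb d B),
      bool_hom (@emb d B),
      dense_emb (@emb d B) &
      compact_emb (@emb d B)].
Proof.
split; [| exact: emb_inj | exact: emb_bool_hom | exact: emb_dense |
          exact: emb_compact].
by move=> b; exists (emb b); rewrite emb_regular; split=> //; apply: emb_Lelem.
Qed.
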